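(* Let $M$ be a strongly sofic monoid and let $K$ be a field. Then the monoid algebra $K[M]$ is stably finite.
   Context: A monoid $M$ is strongly sofic if for every finite subset $F \subset M$ there exists an integer $\Delta_F \geq 1$ such that for every $\varepsilon > 0$ there exist a non-empty finite set $D$ and a map $\sigma \colon M \to \operatorname{Map}(D)$ (where $\operatorname{Map}(D)$ is the monoid of all maps $D \to D$ under composition) satisfying: (1) $\sigma(1_M) = \mathrm{Id}_D$; (2) $d_D^{\mathrm{Ham}}(\sigma(k_1k_2),\sigma(k_1)\sigma(k_2)) \leq \varepsilon$ for all $k_1,k_2 \in F$; (3) $d_D^{\mathrm{Ham}}(\sigma(k_1),\sigma(k_2)) \geq 1-\varepsilon$ for all distinct $k_1,k_2 \in F$; (4) $|\sigma(k)^{-1}(v)| \leq \Delta_F$ for all $k \in F$, $v \in D$. Here $d_D^{\mathrm{Ham}}(f,g) = \frac{1}{|D|}|\{v \in D : f(v) \neq g(v)\}|$. A ring $R$ is stably finite if for every integer $d \geq 1$ the multiplicative monoid of $d \times d$ matrices over $R$ is directly finite, i.e., $XY = I$ implies $YX = I$. *)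

From HB Require Import structures.
From mathcomp Require Import all_boot all_order all_algebra.
From mathcomp Require Import finmap.
From mathcomp.multinomials Require Import monalg.
From mathcomp Require Import monoid.

Set Implicit Arguments.
Unset Strict Implicit.
Unset Printing Implicit Defensive.

Import Order.TTheory GRing.Theory Num.Theory.

Local Open Scope fset_scope.
Local Open Scope ring_scope.

(* The monoid algebra R[M] of a monoid M (mathcomp's [monoidType],     *)
(* which carries a choice structure) over a ring R: finitely supported *)
(* functions M -> R (multinomials' {malg R[M]}, with its Z-module and  *)
(* R-module structures) with the convolution product                   *)
(*   (sum_a f_a a) * (sum_b g_b b) = sum_{a,b} f_a g_b (a*b).          *)
(* multinomials only provides the ring structure for its restricted    *)
(* monomType; we redo it here for an arbitrary monoid.                 *)

Definition monoid_algebra (M : monoidType) (R : nzRingType) : predArgType :=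
  @malg M R.

HB.instance Definition _ (M : monoidType) (R : nzRingType) :=
  GRing.Lmodule.on (monoid_algebra M R).

Section MonoidAlgebraRing.
Context (M : monoidType) (R : nzRingType).

Implicit Types (g : monoid_algebra M R).

Definition ma_one : monoid_algebra M R := << (1%g : M) >>.

Definition ma_mul g1 g2 : monoid_algebra M R :=
  \sum_(k1 <- msupp g1) \sum_(k2 <- msupp g2)
     << g1@_k1 * g2@_k2 *g (k1 * k2)%g >>.

Lemma ma_mullw (d1 d2 : {fset M}) g1 g2 :
  msupp g1 `<=` d1 -> msupp g2 `<=` d2 ->
  ma_mul g1 g2 = \sum_(k1 <- d1) \sum_(k2 <- d2)
     << g1@_k1 * g2@_k2 *g (k1 * k2)%g >>.
Proof.
move=> le_d1 le_d2; rewrite /ma_mul (big_fset_incl _ le_d1) /=.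
  apply/eq_bigr=> k1 _; apply/big_fset_incl => // k _ /mcoeff_outdom ->.
  by rewrite mulr0 monalgU0.
move=> k _ /mcoeff_outdom g1k.
by rewrite big1 => // k' _; rewrite g1k mul0r monalgU0.
Qed.

Lemma ma_mulrw (d1 d2 : {fset M}) g1 g2 :
  msupp g1 `<=` d1 -> msupp g2 `<=` d2 ->
  ma_mul g1 g2 = \sum_(k2 <- d2) \sum_(k1 <- d1)
     << g1@_k1 * g2@_k2 *g (k1 * k2)%g >>.
Proof. by move=> le_d1 le_d2; rewrite (ma_mullw le_d1 le_d2) exchange_big. Qed.

Lemma ma_mul0g : left_zero 0 ma_mul.
Proof. by move=> g; rewrite /ma_mul msupp0 big_seq_fset0. Qed.

Lemma ma_mulg0 : right_zero 0 ma_mul.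
Proof.
by move=> g; rewrite /ma_mul exchange_big /= msupp0 big_seq_fset0.
Qed.

Lemma ma_mulUg c k g :
  ma_mul << c *g k >> g = \sum_(k' <- msupp g) << c * g@_k' *g (k * k')%g >>.
Proof.
rewrite (ma_mullw msuppU_le (fsubset_refl _)) big_seq_fset1.
by apply/eq_bigr => k' _; rewrite mcoeffUU.
Qed.

Lemma ma_mulgU c k g :
  ma_mul g << c *g k >> = \sum_(k' <- msupp g) << g@_k' * c *g (k' * k)%g >>.
Proof.
rewrite (ma_mulrw (fsubset_refl _) msuppU_le) big_seq_fset1.
by apply/eq_bigr=> k' _; rewrite mcoeffUU.
Qed.

Lemma ma_mulUU c1 c2 k1 k2 :
  ma_mul << c1 *g k1 >> << c2 *g k2 >> = << c1 * c2 *g (k1 * k2)%g >>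
  :> monoid_algebra M R.
Proof. by rewrite (ma_mulrw msuppU_le msuppU_le) !big_seq_fset1 !mcoeffUU. Qed.

Lemma ma_mulEl1 g1 g2 :
  ma_mul g1 g2 = \sum_(k1 <- msupp g1) ma_mul << g1@_k1 *g k1 >> g2.
Proof. by apply/eq_bigr=> k _; rewrite ma_mulUg. Qed.

Lemma ma_mulEr1 g1 g2 :
  ma_mul g1 g2 = \sum_(k2 <- msupp g2) ma_mul g1 << g2@_k2 *g k2 >>.
Proof.
rewrite (ma_mulrw (fsubset_refl _) (fsubset_refl _)).
by apply/eq_bigr=> k _; rewrite ma_mulgU.
Qed.

Lemma ma_mul1g : left_id ma_one ma_mul.
Proof.
move=> g; rewrite ma_mulUg [RHS]monalgE.
by apply/eq_bigr=> kg _; rewrite mul1r mul1g.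
Qed.

Lemma ma_mulg1 : right_id ma_one ma_mul.
Proof.
move=> g; rewrite ma_mulgU [RHS]monalgE.
by apply/eq_bigr=> k _; rewrite mulr1 mulg1.
Qed.

Lemma ma_mulgDl : left_distributive ma_mul +%R.
Proof.
move=> g1 g2 g.
rewrite [in RHS](@ma_mullw _ _ g1 g (fsubsetUl _ (msupp g2)) (fsubset_refl _)).
rewrite [in RHS](@ma_mullw _ _ g2 g (fsubsetUr (msupp g1) _) (fsubset_refl _)).
rewrite (ma_mullw (msuppD_le _ _) (fsubset_refl _)).
rewrite -big_split /=; apply/eq_bigr=> k1 _.
rewrite -big_split /=; apply/eq_bigr=> k2 _.
by rewrite mcoeffD mulrDl monalgUD.
Qed.

Lemma ma_mulgDr : right_distributive ma_mul +%R.
Proof.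
move=> g g1 g2.
rewrite [in RHS](@ma_mulrw _ _ g g1 (fsubset_refl _) (fsubsetUl _ (msupp g2))).
rewrite [in RHS](@ma_mulrw _ _ g g2 (fsubset_refl _) (fsubsetUr (msupp g1) _)).
rewrite (ma_mulrw (fsubset_refl _) (msuppD_le _ _)).
rewrite -big_split /=; apply/eq_bigr => k1 _.
rewrite -big_split /=; apply/eq_bigr => k2 _.
by rewrite mcoeffD mulrDr monalgUD.
Qed.

Lemma ma_mulA : associative ma_mul.
Proof.
move=> g1 g2 g3.
rewrite [RHS](big_morph (ma_mul^~ _) (fun _ _ => ma_mulgDl _ _ _) (ma_mul0g _)).
rewrite ma_mulEl1; apply/eq_bigr=> k1 _.
rewrite [LHS](big_morph (ma_mul _) (fun _ _ => ma_mulgDr _ _ _) (ma_mulg0 _)).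
rewrite [RHS](big_morph (ma_mul^~ _) (fun _ _ => ma_mulgDl _ _ _) (ma_mul0g _)).
apply/eq_bigr=> k2 _.
rewrite [LHS](big_morph (ma_mul _) (fun _ _ => ma_mulgDr _ _ _) (ma_mulg0 _)).
by rewrite ma_mulEr1; apply/eq_bigr=> k3 _; rewrite !ma_mulUU mulrA mulgA.
Qed.

Lemma ma_oner_eq0 : ma_one != 0.
Proof. by apply/eqP/malgP=> /(_ 1%g) /eqP; rewrite !mcoeffsE oner_eq0. Qed.

HB.instance Definition _ := GRing.Zmodule_isRing.Build (monoid_algebra M R)
  ma_mulA ma_mul1g ma_mulg1 ma_mulgDl ma_mulgDr ma_oner_eq0.

End MonoidAlgebraRing.

Definition stably_finite (R : pzRingType) : Prop :=
  forall (d : nat), (0 < d)%N ->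
  forall X Y : 'M[R]_d, X *m Y = 1%:M -> Y *m X = 1%:M.

Definition ham_dist (D : finType) (f g : D -> D) : rat :=
  (#|[set v | f v != g v]|%:R / #|D|%:R)%R.

Definition strongly_sofic (M : monoidType) : Prop :=
  forall F : seq M,
  exists Delta : nat, (1 <= Delta)%N /\
  forall eps : rat, 0 < eps ->
  exists (D : finType) (sigma : M -> D -> D),
    [/\ (0 < #|D|)%N,
        (forall v : D, sigma 1%g v = v),
        (forall k1 k2, k1 \in F -> k2 \in F ->
           ham_dist (sigma (k1 * k2)%g) (sigma k1 \o sigma k2) <= eps),
        (forall k1 k2, k1 \in F -> k2 \in F -> k1 != k2 ->
           1 - eps <= ham_dist (sigma k1) (sigma k2)) &
        (forall k, k \in F -> forall v : D,
           (#|[set u | sigma k u == v]| <= Delta)%N)].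

(* Let X Y = 1 in M_d(K[M]).  A sofic approximation sigma : M -> Map(D) sends
   a in K[M] to the D x D matrix sum_k a_k P(sigma k), P(f) the 0/1 matrix of
   f, and hence X, Y to dD x dD matrices A, B over K.  The map is multiplicative
   on every column (j, w) at which sigma is multiplicative on the supports of X
   and Y, which fails only for O(eps |D|) points w; since
   rank (B A - 1) <= rank (A B - 1) over the field K, the image of Y X - 1 has
   rank O(eps |D|).  On the other hand, if (Y X - 1)_ij has a nonzero
   coefficient at k0, then the points v at which sigma k0 v differs from every
   other sigma k v form almost all of D, and a greedy choice (using the fiber
   bound Delta) keeps a proportion 1 / (2 Delta m + 1) of them, m the size of
   the support of (Y X - 1)_ij, whose rows (i, sigma k0 v) and columns (j, v)
   cut out a diagonal submatrix with nonzero diagonal.  Its size is linear in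
   |D|, a contradiction for eps small. *)

From HB Require Import structures.
From mathcomp Require Import all_boot all_order all_algebra.
From mathcomp Require Import finmap.
From mathcomp.multinomials Require Import monalg.
From mathcomp Require Import monoid.
From mathcomp Require Import zify lra.

Set Implicit Arguments.
Unset Strict Implicit.
Unset Printing Implicit Defensive.

Import Order.TTheory GRing.Theory Num.Theory.

Local Open Scope fset_scope.
Local Open Scope ring_scope.

Section RankBounds.
Variable K : fieldType.

Lemma mxrank_sub_le_cols m n (A B : 'M[K]_(m, n)) (J : {set 'I_n}) :
  (forall i j, j \notin J -> A i j = B i j) -> (\rank (A - B)%R <= #|J|)%N.
Proof.
move=> eqAB; have : forall i j, j \notin J -> (A - B) i j = 0.
  by move=> i j /eqAB; rewrite !mxE => ->; rewrite subrr.
move: (A - B) => P P0.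
have -> : P = \sum_(j in J) P *m delta_mx j j.
  have colE j' i j : (P *m delta_mx j' j') i j = P i j' * (j' == j)%:R.
    rewrite mxE (bigD1 j') //= mxE eqxx eq_sym big1 ?addr0 // => k /negPf k_j'.
    by rewrite mxE k_j' mulr0.
  apply/matrixP=> i j; rewrite summxE; under eq_bigr do rewrite colE.
  have [Jj|Jj] := boolP (j \in J).
    rewrite (bigD1 j) //= eqxx mulr1 big1 ?addr0 // => j' /andP[_ /negPf->].
    by rewrite mulr0.
  rewrite P0 // big1 // => j' Jj'; case: eqVneq => [ej|]; last by rewrite mulr0.
  by rewrite -ej Jj' in Jj.
rewrite -sum1_card; elim/big_ind2: _ => [|A1 r1 A2 r2 le1 le2|j _].
- by rewrite mxrank0.
- exact: leq_trans (mxrank_add _ _) (leq_add le1 le2).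
- by apply: leq_trans (mxrankM_maxr _ _) _; rewrite mxrank_delta.
Qed.

Lemma mxrank_sub1_mulC n (A B : 'M[K]_n) :
  (\rank (B *m A - 1%:M)%R <= \rank (A *m B - 1%:M)%R)%N.
Proof.
set L := kermx (A *m B - 1%:M).
have LAB : L *m A *m B = L.
  by apply/eqP; rewrite -subr_eq0 -mulmxA -{2}[L]mulmx1 -mulmxBr mulmx_ker.
have LA_ker : (L *m A <= kermx (B *m A - 1%:M))%MS.
  by apply/sub_kermxP; rewrite mulmxBr mulmx1 mulmxA LAB subrr.
have := leq_trans (leq_trans (eq_leq (congr1 mxrank (esym LAB))) (mxrankM_maxl _ _))
  (mxrankS LA_ker).
rewrite !mxrank_ker; have := rank_leq_col (A *m B - 1%:M).
have := rank_leq_col (B *m A - 1%:M); lia.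
Qed.

Lemma mxrank_mxsub m n m' n' (A : 'M[K]_(m, n))
    (f : 'I_m' -> 'I_m) (g : 'I_n' -> 'I_n) :
  (\rank (mxsub f g A) <= \rank A)%N.
Proof.
rewrite -[A]mul1mx mxsub_mul; apply: leq_trans (mxrankM_maxr _ _) _.
by rewrite -[A in colsub _ A]mulmx1 -mulmx_colsub mul1mx mxrankM_maxl.
Qed.

Lemma mxrank_trig n (A : 'M[K]_n) :
  is_trig_mx A -> (forall i, A i i != 0) -> \rank A = n.
Proof.
move=> Atrig A_nz; apply: mxrank_unit.
by rewrite unitmxE det_trig // unitfE; apply/prodf_neq0 => i _.
Qed.

End RankBounds.

Lemma card_has_le (T : finType) (I : Type) (s : seq I) (P : I -> pred T) :
  (#|[set w | has (P^~ w) s]| <= \sum_(x <- s) #|[set w | P x w]|)%N.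
Proof.
elim: s => [|x s IH]; rewrite ?big_nil ?big_cons.
  by rewrite leqn0 cards_eq0; apply/eqP/setP=> w; rewrite !inE.
have -> : [set w | has (P^~ w) (x :: s)] =
    [set w | P x w] :|: [set w | has (P^~ w) s].
  by apply/setP=> w; rewrite !inE.
exact: leq_trans (leq_card_setU _ _).1 (leq_add (leqnn _) IH).
Qed.

Lemma sum_le_size (R : numDomainType) (I : eqType) (s : seq I) (F : I -> R) c :
  (forall x, x \in s -> F x <= c) -> \sum_(x <- s) F x <= (size s)%:R * c.
Proof.
move=> leFc; rewrite -sum1_size natr_sum mulr_suml big_seq [X in _ <= X]big_seq.
by apply: ler_sum => x sx; rewrite mul1r leFc.
Qed.

Lemma large_independent_subset (T : finType) (e : rel T) (k : nat) :
  symmetric e -> (forall x, #|[set y | e x y]| <= k)%N ->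
  forall G : {set T}, exists V : {set T},
    [/\ V \subset G, (#|G| <= k.+1 * #|V|)%N
       & {in V &, forall x y, x != y -> ~~ e x y}].
Proof.
move=> e_sym e_deg G; have [n] := ubnP #|G|; elim: n G => // n IH G.
have [-> _|[x Gx] ltGn] := set_0Vmem G.
  by exists set0; rewrite sub0set cards0 muln0; split=> // y; rewrite inE.
set N := x |: [set y | e x y].
have [|V [VG' cardV indepV]] := IH (G :\: N).
  rewrite ltnS in ltGn; apply: leq_trans ltGn; apply: proper_card; apply/properP.
  by split; [exact: subsetDl | exists x; rewrite // !inE eqxx].
have notN y : y \in V -> (y != x) && ~~ e x y.
  by move=> /(subsetP VG'); rewrite !inE negb_or => /andP[].
have xV : x \notin V by apply/negP => /notN; rewrite eqxx.
exists (x |: V); split.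
- by rewrite subUset sub1set Gx (subset_trans VG' (subsetDl _ _)).
- have cardN : (#|N| <= k.+1)%N.
    by rewrite cardsU1 -add1n; apply: leq_add (leq_b1 _) (e_deg x).
  rewrite cardsU1 xV mulnS -(cardsID N G).
  have := leq_trans (subset_leq_card (subsetIr G N)) cardN; lia.
- move=> y z; rewrite !inE => /predU1P[->|Vy] /predU1P[->|Vz]; rewrite ?eqxx //.
  + by have /andP[_] := notN z Vz.
  + by have /andP[_] := notN y Vy; rewrite e_sym.
  + exact: indepV.
Qed.

Section SoficRepresentation.
Variables (M : monoidType) (K : fieldType) (D : finType) (sigma : M -> D -> D).
Local Notation KM := (monoid_algebra M K).

Definition mx_msupp m n (A : 'M[KM]_(m, n)) : {fset M} :=
  \bigcup_(ij in {: 'I_m * 'I_n}) msupp (A ij.1 ij.2).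

Lemma msupp_mx_msupp m n (A : 'M[KM]_(m, n)) i j : msupp (A i j) `<=` mx_msupp A.
Proof.
by rewrite (@bigfcup_sup _ _ _ (i, j) _ (fun ij => msupp (A ij.1 ij.2))) ?mem_index_enum.
Qed.

(* The (u, v) entry of sum_k a_k P(sigma k), where P(f) u v = (f v == u). *)
Definition sofic_coef (u v : D) (a : KM) : K :=
  \sum_(k <- msupp a) a@_k * (sigma k v == u)%:R.

Lemma sofic_coefEw (T : {fset M}) u v a : msupp a `<=` T ->
  sofic_coef u v a = \sum_(k <- T) a@_k * (sigma k v == u)%:R.
Proof.
by move=> aT; apply: big_fset_incl => // k _ /mcoeff_outdom ->; rewrite mul0r.
Qed.

Fact sofic_coef_is_zmod_morphism u v : zmod_morphism (sofic_coef u v).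
Proof.
move=> a b; rewrite (sofic_coefEw _ _ (msuppB_le a b)).
rewrite (sofic_coefEw _ _ (fsubsetUl _ (msupp b))).
rewrite (sofic_coefEw _ _ (fsubsetUr (msupp a) _)).
by rewrite -sumrB; apply: eq_bigr => k _; rewrite mcoeffB mulrBl.
Qed.

HB.instance Definition _ u v := GRing.isZmodMorphism.Build KM K (sofic_coef u v)
  (sofic_coef_is_zmod_morphism u v).

Lemma sofic_coefU u v c k : sofic_coef u v << c *g k >> = c * (sigma k v == u)%:R.
Proof. by rewrite (sofic_coefEw _ _ msuppU_le) big_seq_fset1 mcoeffUU. Qed.

Lemma sofic_coef1 u v : sigma 1%g =1 id -> sofic_coef u v 1 = (v == u)%:R.
Proof. by move=> sigma1; rewrite [1]/(ma_one _ _) sofic_coefU sigma1 mul1r. Qed.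

Lemma sofic_coefM u w (x y : KM) :
  (forall k1 k2, k1 \in msupp x -> k2 \in msupp y ->
     sigma (k1 * k2)%g w = sigma k1 (sigma k2 w)) ->
  \sum_v sofic_coef u v x * sofic_coef v w y = sofic_coef u w (x * y).
Proof.
move=> sigmaM; rewrite [x * y]/(ma_mul x y) raddf_sum /=.
under eq_bigr do rewrite /sofic_coef mulr_suml.
rewrite exchange_big /= !big_seq; apply: eq_bigr => k1 x_k1.
under eq_bigr do rewrite mulr_sumr.
rewrite exchange_big /= raddf_sum /= !big_seq; apply: eq_bigr => k2 y_k2.
rewrite sofic_coefU sigmaM // (bigD1 (sigma k2 w)) //= eqxx mulr1 big1 ?addr0.
  by rewrite mulrAC.
by move=> v v_neq; rewrite [sigma k2 w == v]eq_sym (negPf v_neq) !mulr0.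
Qed.

Variable d : nat.
Local Notation N := #|{: 'I_d * D}|.

Definition sofic_mx (Z : 'M[KM]_d) : 'M[K]_N :=
  \matrix_(p, q)
    sofic_coef (enum_val p).2 (enum_val q).2 (Z (enum_val p).1 (enum_val q).1).

Lemma sofic_mxB (Z1 Z2 : 'M[KM]_d) : sofic_mx (Z1 - Z2) = sofic_mx Z1 - sofic_mx Z2.
Proof. by apply/matrixP=> p q; rewrite !mxE raddfB. Qed.

Lemma sofic_mx1 : sigma 1%g =1 id -> sofic_mx 1%:M = 1%:M.
Proof.
move=> sigma1; apply/matrixP=> p q; rewrite !mxE -(inj_eq enum_val_inj).
case: (enum_val p) => i u; case: (enum_val q) => j w /=.
rewrite xpair_eqE; have [_|_] := eqVneq i j; last by rewrite raddf0.
by rewrite sofic_coef1 // eq_sym.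
Qed.

Lemma sofic_mxM_col (X Y : 'M[KM]_d) p q :
  (forall k1 k2, k1 \in mx_msupp X -> k2 \in mx_msupp Y ->
     sigma (k1 * k2)%g (enum_val q).2 = sigma k1 (sigma k2 (enum_val q).2)) ->
  (sofic_mx X *m sofic_mx Y) p q = sofic_mx (X *m Y) p q.
Proof.
move=> sigmaM; rewrite !mxE raddf_sum /= (reindex enum_rank) /=; last first.
  by exists enum_val => r _; rewrite ?enum_rankK ?enum_valK.
set u := (enum_val p).2; set w := (enum_val q).2.
rewrite (eq_bigr (fun lv => sofic_coef u lv.2 (X (enum_val p).1 lv.1) *
                            sofic_coef lv.2 w (Y lv.1 (enum_val q).1))); last first.
  by move=> lv _; rewrite !mxE !enum_rankK.
rewrite -(pair_bigA _ (fun l v => sofic_coef u v (X (enum_val p).1 l) *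
                                  sofic_coef v w (Y l (enum_val q).1))).
apply: eq_bigr => l _; apply: sofic_coefM => k1 k2 Xk1 Yk2.
by apply: sigmaM; [apply: fsubsetP Xk1 | apply: fsubsetP Yk2]; apply: msupp_mx_msupp.
Qed.

Definition sofic_defect (S : {fset M}) : {set D} :=
  [set w | has (fun k1 =>
             has (fun k2 => sigma (k1 * k2)%g w != sigma k1 (sigma k2 w)) S) S].

Lemma mxrank_sofic_mx_mulC_sub1 (S : {fset M}) (X Y : 'M[KM]_d) :
  sigma 1%g =1 id -> mx_msupp X `<=` S -> mx_msupp Y `<=` S -> X *m Y = 1%:M ->
  (\rank (sofic_mx (Y *m X - 1%:M)%R) <= 2 * (d * #|sofic_defect S|))%N.
Proof.
move=> sigma1 XS YS XY.
set J := [set q : 'I_N | (enum_val q).2 \in sofic_defect S].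
have cardJ : (#|J| <= d * #|sofic_defect S|)%N.
  have -> : (d * #|sofic_defect S|)%N = #|setX [set: 'I_d] (sofic_defect S)|.
    by rewrite cardsX cardsT card_ord.
  rewrite -(card_imset J enum_val_inj); apply/subset_leq_card/subsetP.
  move=> _ /imsetP[q qJ ->]; move: qJ; rewrite inE.
  by case: (enum_val q) => l w /= wS; rewrite in_setX in_setT wS.
have sofic_mxM_good Z1 Z2 p q : mx_msupp Z1 `<=` S -> mx_msupp Z2 `<=` S ->
    q \notin J -> (sofic_mx Z1 *m sofic_mx Z2) p q = sofic_mx (Z1 *m Z2) p q.
  move=> Z1S Z2S qJ; apply: sofic_mxM_col => k1 k2 Z1k1 Z2k2.
  move: qJ; rewrite !inE => /hasPn /(_ k1 (fsubsetP Z1S _ Z1k1)).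
  by move=> /hasPn /(_ k2 (fsubsetP Z2S _ Z2k2)); rewrite negbK => /eqP.
have rkAB : (\rank (sofic_mx X *m sofic_mx Y - 1%:M)%R <= #|J|)%N.
  by apply: mxrank_sub_le_cols => p q qJ; rewrite sofic_mxM_good // XY sofic_mx1.
have rkYX : (\rank (sofic_mx (Y *m X) - sofic_mx Y *m sofic_mx X)%R <= #|J|)%N.
  by apply: mxrank_sub_le_cols => p q qJ; rewrite sofic_mxM_good.
have -> : sofic_mx (Y *m X - 1%:M) =
    (sofic_mx Y *m sofic_mx X - 1%:M) + (sofic_mx (Y *m X) - sofic_mx Y *m sofic_mx X).
  by rewrite sofic_mxB sofic_mx1 // [RHS]addrC [RHS]addrA subrK.
apply: leq_trans (mxrank_add _ _) _; rewrite mul2n -addnn.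
apply: leq_add (leq_trans rkYX cardJ).
exact: leq_trans (mxrank_sub1_mulC _ _) (leq_trans rkAB cardJ).
Qed.

Definition sofic_clash (T : {fset M}) (k0 : M) : rel D :=
  fun v y => has (fun k => (sigma k v == sigma k0 y) || (sigma k y == sigma k0 v)) T.

Definition sofic_separated (T : {fset M}) (k0 : M) : {set D} :=
  [set v | all (fun k => (k == k0) || (sigma k v != sigma k0 v)) T].

(* Rows (i, sigma k0 v) and columns (j, v), v in V, cut out a diagonal submatrix
   with diagonal entries (Z i j)@_k0. *)
Lemma card_le_mxrank_sofic_mx (Z : 'M[KM]_d) i j k0 (V : {set D}) :
  k0 \in msupp (Z i j) -> V \subset sofic_separated (msupp (Z i j)) k0 ->
  {in V &, forall v y, v != y -> ~~ sofic_clash (msupp (Z i j)) k0 v y} ->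
  (#|V| <= \rank (sofic_mx Z))%N.
Proof.
move=> Zk0 Vsep Vindep.
pose f (r : 'I_#|V|) : 'I_N := enum_rank (i, sigma k0 (enum_val r)).
pose g (r : 'I_#|V|) : 'I_N := enum_rank (j, enum_val r).
have subE r s : mxsub f g (sofic_mx Z) r s =
    sofic_coef (sigma k0 (enum_val r)) (enum_val s) (Z i j).
  by rewrite !mxE !enum_rankK.
apply: leq_trans (mxrank_mxsub _ f g); rewrite mxrank_trig //.
  apply/is_trig_mxP => r s lt_rs; rewrite subE /sofic_coef big1_seq // => k /= Zk.
  have /Vindep : enum_val s != enum_val r.
    by apply: contraTneq lt_rs => /enum_val_inj ->; rewrite ltnn.
  move=> /(_ (enum_valP s) (enum_valP r)) /hasPn /(_ k Zk).
  by rewrite negb_or => /andP[/negPf -> _]; rewrite mulr0.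
move=> r; rewrite subE /sofic_coef (big_fsetD1 k0) //= eqxx mulr1.
rewrite big1_fset ?addr0 ?mcoeff_neq0 // => k; rewrite !inE => /andP[k_k0 Zk] _.
have := subsetP Vsep _ (enum_valP r); rewrite inE => /allP /(_ k Zk).
by rewrite (negPf k_k0) => /negPf ->; rewrite mulr0.
Qed.

Section Estimates.
(* [e] stands for eps * #|D|. *)
Variables (U : {fset M}) (Delta : nat) (e : rat).
Hypothesis e_ge0 : 0 <= e.
Hypothesis sigma_mul : forall k1 k2, k1 \in U -> k2 \in U ->
  #|[set w | sigma (k1 * k2)%g w != sigma k1 (sigma k2 w)]|%:R <= e.
Hypothesis sigma_sep : forall k1 k2, k1 \in U -> k2 \in U -> k1 != k2 ->
  #|[set v | sigma k1 v == sigma k2 v]|%:R <= e.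
Hypothesis sigma_fiber :
  forall k, k \in U -> forall v, (#|[set u | sigma k u == v]| <= Delta)%N.

Lemma card_sofic_defect (S : {fset M}) :
  S `<=` U -> #|sofic_defect S|%:R <= (#|`S| * #|`S|)%:R * e.
Proof.
move=> SU; have := card_has_le S (fun k1 w =>
  has (fun k2 => sigma (k1 * k2)%g w != sigma k1 (sigma k2 w)) S).
rewrite -(ler_nat rat) natr_sum => /le_trans; apply.
rewrite natrM -mulrA; apply: sum_le_size => k1 Sk1.
have := card_has_le S (fun k2 w => sigma (k1 * k2)%g w != sigma k1 (sigma k2 w)).
rewrite -(ler_nat rat) natr_sum => /le_trans; apply.
by apply: sum_le_size => k2 Sk2; apply: sigma_mul; apply: fsubsetP SU _ _.
Qed.

Lemma card_sofic_separatedarated (T : {fset M}) k0 :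
  T `<=` U -> k0 \in T -> #|D|%:R - #|`T|%:R * e <= #|sofic_separated T k0|%:R.
Proof.
move=> TU Tk0.
pose P k v := (k != k0) && (sigma k v == sigma k0 v).
have sub : ~: sofic_separated T k0 \subset [set v | has (P^~ v) T].
  apply/subsetP => v; rewrite !inE => /allPn[k Tk].
  by rewrite negb_or negbK => kP; apply/hasP; exists k.
have := leq_trans (subset_leq_card sub) (card_has_le T P).
rewrite -(ler_nat rat) natr_sum => /le_trans /(_ _) compl_le.
have {compl_le}compl_le : #|~: sofic_separated T k0|%:R <= #|`T|%:R * e.
  apply/compl_le/sum_le_size => k Tk; have [->|k_k0] := eqVneq k k0.
    rewrite (_ : [set v | P k0 v] = set0) ?cards0 //.
    by apply/setP => v; rewrite !inE /P eqxx.
  apply: le_trans (sigma_sep (fsubsetP TU _ Tk) (fsubsetP TU _ Tk0) k_k0).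
  by rewrite ler_nat; apply/subset_leq_card/subsetP => v; rewrite !inE => /andP[].
have := cardsC (sofic_separated T k0); move/(congr1 (fun n => n%:R : rat)); rewrite natrD.
lra.
Qed.

Lemma sofic_clash_sym T k0 : symmetric (sofic_clash T k0).
Proof. by move=> v y; apply: eq_has => k; rewrite orbC. Qed.

Lemma card_sofic_clash T k0 v : T `<=` U -> k0 \in U ->
  (#|[set y | sofic_clash T k0 v y]| <= Delta.*2 * #|`T|)%N.
Proof.
move=> TU Uk0; apply: leq_trans (card_has_le _ _) _.
rewrite -iter_addn_0 -count_predT -big_const_seq big_seq [X in (_ <= X)%N]big_seq.
apply: leq_sum => k Tk; rewrite -addnn.
have -> : [set y | (sigma k v == sigma k0 y) || (sigma k y == sigma k0 v)] =
    [set y | sigma k0 y == sigma k v] :|: [set y | sigma k y == sigma k0 v].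
  by apply/setP => y; rewrite !inE eq_sym.
apply: leq_trans (leq_card_setU _ _).1 (leq_add _ _); apply: sigma_fiber => //.
exact: fsubsetP TU _ Tk.
Qed.

Lemma card_sofic_domain_le (S : {fset M}) (X Y : 'M[KM]_d) i j k0 :
  sigma 1%g =1 id -> X *m Y = 1%:M ->
  mx_msupp X `<=` S -> mx_msupp Y `<=` S -> S `<=` U ->
  mx_msupp (Y *m X - 1%:M) `<=` U -> k0 \in msupp ((Y *m X - 1%:M) i j) ->
  #|D|%:R <= (#|`U| + (Delta.*2 * #|`U|).+1 * (2 * d) * (#|`S| * #|`S|))%:R * e.
Proof.
move=> sigma1 XY XS YS SU ZU Zk0; set Z := Y *m X - 1%:M in ZU Zk0.
set T := msupp (Z i j) in Zk0; set C := ((Delta.*2 * #|`U|).+1 * (2 * d))%N.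
have TU : T `<=` U := fsubset_trans (msupp_mx_msupp Z i j) ZU.
have TleU : (#|`T| <= #|`U|)%N := fsubset_leq_card TU.
have [V [Vsep cardV Vindep]] := large_independent_subset (sofic_clash_sym T k0)
  (fun v => card_sofic_clash v TU (fsubsetP TU _ Zk0)) (sofic_separated T k0).
have sep_le : (#|sofic_separated T k0| <= C * #|sofic_defect S|)%N.
  rewrite -mulnA; apply: leq_trans cardV (leq_mul _ _).
    by rewrite ltnS leq_mul2l TleU orbT.
  apply: leq_trans (card_le_mxrank_sofic_mx Zk0 Vsep Vindep) _.
  by rewrite -mulnA; apply: mxrank_sofic_mx_mulC_sub1.
move: sep_le; rewrite -(ler_nat rat) natrM => sep_le.
have defect_le := ler_wpM2l (ler0n _ C) (card_sofic_defect SU).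
have TU_e : #|`T|%:R * e <= #|`U|%:R * e by rewrite ler_wpM2r // ler_nat.
have := card_sofic_separatedarated TU Zk0; rewrite natrD natrM mulrDl; lra.
Qed.

End Estimates.

End SoficRepresentation.

Lemma card_neq_le_ham_dist (D : finType) (f g : D -> D) (eps : rat) :
  (0 < #|D|)%N -> ham_dist f g <= eps ->
  #|[set v | f v != g v]|%:R <= eps * #|D|%:R.
Proof. by move=> D_gt0; rewrite /ham_dist ler_pdivrMr ?ltr0n. Qed.

Lemma card_eq_le_ham_dist (D : finType) (f g : D -> D) (eps : rat) :
  (0 < #|D|)%N -> 1 - eps <= ham_dist f g ->
  #|[set v | f v == g v]|%:R <= eps * #|D|%:R.
Proof.
move=> D_gt0; rewrite /ham_dist ler_pdivlMr ?ltr0n //.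
have <- : ~: [set v | f v != g v] = [set v | f v == g v].
  by apply/setP=> v; rewrite !inE negbK.
have := cardsC [set v | f v != g v]; move/(congr1 (fun n => n%:R : rat)).
rewrite natrD; lra.
Qed.

Theorem corollary1p3 (M : monoidType) (K : fieldType) :
  strongly_sofic M -> stably_finite (monoid_algebra M K).
Proof.
move=> sofic d _ X Y XY.
set S := mx_msupp X `|` mx_msupp Y; set U := S `|` mx_msupp (Y *m X - 1%:M).
have [Delta [_ approx]] := sofic U.
set C := (#|`U| + (Delta.*2 * #|`U|).+1 * (2 * d) * (#|`S| * #|`S|))%N.
have eps_gt0 : (0 : rat) < C.+1%:R^-1 by rewrite invr_gt0 ltr0n.
have [D [sigma [D_gt0 sigma1 sigma_mul sigma_sep sigma_fiber]]] := approx _ eps_gt0.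
apply/eqP; rewrite -subr_eq0; apply/eqP/matrixP => i j; rewrite [RHS]mxE.
apply/malgP => k0; rewrite mcoeff0; apply/eqP; rewrite mcoeff_eq0; apply/negP => Zk0.
have e_ge0 : 0 <= (C.+1%:R^-1 : rat) * #|D|%:R by rewrite mulr_ge0 ?ler0n ?ltW.
have := card_sofic_domain_le e_ge0
  (fun k1 k2 Uk1 Uk2 => card_neq_le_ham_dist D_gt0 (sigma_mul k1 k2 Uk1 Uk2))
  (fun k1 k2 Uk1 Uk2 k12 => card_eq_le_ham_dist D_gt0 (sigma_sep k1 k2 Uk1 Uk2 k12))
  sigma_fiber sigma1 XY (fsubsetUl _ _) (fsubsetUr _ _) (fsubsetUl _ _)
  (fsubsetUr _ _) Zk0.
rewrite -/C mulrA -[X in X <= _]mul1r ler_pM2r ?ltr0n // ler_pdivlMr ?ltr0n //.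
by rewrite mul1r ler_nat ltnn.
Qed.
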